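(* For each $n$, let $W\in\mathbb{R}^{n\times n}$ be a random symmetric matrix with zero diagonal whose entries $W_{ij}$, $i<j$, are independent Rademacher random variables (uniform on $\{-1,+1\}$). For $S\subseteq[n]=\{1,\dots,n\}$ let $W_S$ denote the principal submatrix of $W$ with index set $S$. Then for every $\beta>0$ (independent of $n$) there exists $\alpha>0$ (independent of $n$) such that $$\max_{\substack{S\subseteq[n]\\|S|\leq \alpha n}}\|W_S\|_{2\to2}\leq \beta\sqrt{n}$$ with probability at least $1-4e^{-\alpha\log(1/\alpha)n}$.
   Context: $\|M\|_{2\to2}$ denotes the operator norm (largest singular value) of a matrix $M$ with respect to the Euclidean norm. *)

From HB Require Import structures.
From mathcomp Require Import all_boot all_order all_algebra.
From mathcomp Require Import all_classical all_reals all_analysis.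
Set Implicit Arguments. Unset Strict Implicit. Unset Printing Implicit Defensive.
Import Order.TTheory GRing.Theory Num.Theory.
Local Open Scope classical_set_scope.
Local Open Scope ring_scope.

Definition vnorm (R : realType) (k : nat) (v : 'cV[R]_k) : R :=
  Num.sqrt (\sum_(i < k) v i 0 ^+ 2).

Definition opnorm (R : realType) (m k : nat) (A : 'M[R]_(m, k)) : R :=
  sup [set vnorm (A *m v) | v in [set v : 'cV[R]_k | vnorm v <= 1]].

(* Only the coordinates (i,j) with i < j are used; they are then i.i.d.
   uniform bits, so W_ij (i<j) are independent Rademacher variables. *)
Definition sign (R : realType) (b : bool) : R := if b then 1 else -1.

Definition rademacherW (R : realType) (n : nat) (x : {ffun 'I_n * 'I_n -> bool})
  : 'M[R]_n :=
  \matrix_(i, j) (if (i < j)%N then sign R (x (i, j))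
                  else if (j < i)%N then sign R (x (j, i)) else 0).

(* Principal submatrix W_S, indexed by the elements of S in increasing order. *)
Definition principal_submx (R : realType) (n : nat) (A : 'M[R]_n) (S : {set 'I_n})
  : 'M[R]_#|S| :=
  \matrix_(i < #|S|, j < #|S|) A (enum_val i) (enum_val j).

Definition prob (R : realType) (n : nat) (E : pred {ffun 'I_n * 'I_n -> bool}) : R :=
  #|[set x | E x]|%:R / #|{ffun 'I_n * 'I_n -> bool}|%:R.

From HB Require Import structures.
From mathcomp Require Import all_boot all_order all_algebra.
From mathcomp Require Import all_classical all_reals all_analysis.
From mathcomp Require Import ring lra.
Import Order.TTheory GRing.Theory Num.Theory.
Local Open Scope ring_scope.

(* The operator norm of W_S with |S| <= s is at most the supremum M of u^T W v over unit
   vectors u, v with at most s nonzero entries.  Rounding such vectors to the grid of mesh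
   1 / (4 sqrt (s + 1)) leaves residuals of norm <= 1/4, so M is at most twice the maximum
   over pairs of grid vectors, of which there are exp(O(s log (1/alpha) + n alpha)).  For a fixed
   pair, u^T W v = sum_(i<j) (u_i v_j + u_j v_i) W_ij is a Rademacher sum with squared
   coefficient norm <= 2, so by Chernoff it exceeds beta sqrt n / 2 with probability
   <= exp (- beta^2 n / 64).  With alpha = g^2 and g <= beta^2 / 4096 the union bound wins. *)
Lemma opnorm_le (R : realType) (m k : nat) (A : 'M[R]_(m, k)) (c : R) :
  (forall v, vnorm v <= 1 -> vnorm (A *m v) <= c) -> opnorm A <= c.
Proof.
move=> Ac; apply: ge_sup => [|_ [v /= v1 <-]]; last exact: Ac.
exists (vnorm (A *m 0)), 0 => //=.
by rewrite /vnorm big1 ?sqrtr0 // => i _; rewrite mxE expr0n.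
Qed.

Lemma sqr_vnorm (R : realType) (k : nat) (v : 'cV[R]_k) : vnorm v ^+ 2 = \sum_i v i 0 ^+ 2.
Proof. by rewrite sqr_sqrtr // sumr_ge0 // => i _; rewrite sqr_ge0. Qed.

Lemma sum_pairE (V : nmodType) (I J : finType) (G : I * J -> V) :
  \sum_p G p = \sum_i \sum_j G (i, j).
Proof. by rewrite pair_bigA; apply: eq_bigr => -[]. Qed.

Lemma card_set_natr (R : numDomainType) (T : finType) (P : pred T) :
  #|[set x | P x]|%:R = \sum_x (P x)%:R :> R.
Proof.
rewrite -sum1_card natr_sum big_mkcond.
by apply: eq_bigr => x _; rewrite inE; case: (P x).
Qed.

Section SparseBilinearForm.
Context {R : realType} {n : nat}.
Implicit Types (W : 'M[R]_n) (u v y z : 'I_n -> R) (s : R).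

Definition bilin W u v : R := \sum_i \sum_j u i * W i j * v j.

Definition sqnorm u : R := \sum_i u i ^+ 2.

Definition supp_size u : R := \sum_i (u i != 0)%:R.

Definition sparse_unit s u : Prop := sqnorm u <= 1 /\ supp_size u <= s.

Definition sparse_form_sup W s : R :=
  sup [set bilin W u v | u in sparse_unit s & v in sparse_unit s]%classic.

Lemma sqnorm_ge0 u : 0 <= sqnorm u.
Proof. by rewrite sumr_ge0 // => i _; rewrite sqr_ge0. Qed.

Lemma sqnorm_le1_norm u i : sqnorm u <= 1 -> `|u i| <= 1.
Proof.
move=> u1; rewrite -(expr_le1 (n := 2)) // real_normK ?num_real //.
apply: le_trans u1; rewrite /sqnorm (bigD1 i) //= lerDl.
by rewrite sumr_ge0 // => j _; rewrite sqr_ge0.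
Qed.

Lemma supp_size_le u v : (forall i, v i = 0 -> u i = 0) -> supp_size u <= supp_size v.
Proof.
move=> uv; apply: ler_sum => i _.
by case: (eqVneq (v i) 0) => [/uv -> | _]; rewrite ?eqxx // ler_nat leq_b1.
Qed.

Lemma sparse_unit0 s : 0 <= s -> sparse_unit s (fun=> 0).
Proof.
by move=> s0; split; rewrite [X in X <= _]big1 // => i _; rewrite ?expr0n ?eqxx.
Qed.

Lemma bilin0l W v : bilin W (fun=> 0) v = 0.
Proof. by rewrite /bilin big1 // => i _; rewrite big1 // => j _; rewrite !mul0r. Qed.

Lemma bilin_split W u v y z :
  bilin W u v = bilin W y z + bilin W (fun i => u i - y i) v + bilin W y (fun j => v j - z j).
Proof.
rewrite /bilin -!big_split; apply: eq_bigr => i _; rewrite -!big_split.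
by apply: eq_bigr => j _ /=; ring.
Qed.

Lemma bilinZl W c u v : bilin W (fun i => c * u i) v = c * bilin W u v.
Proof.
rewrite /bilin mulr_sumr; apply: eq_bigr => i _; rewrite mulr_sumr.
by apply: eq_bigr => j _; rewrite !mulrA.
Qed.

Lemma bilinZr W c u v : bilin W u (fun j => c * v j) = c * bilin W u v.
Proof.
rewrite /bilin mulr_sumr; apply: eq_bigr => i _; rewrite mulr_sumr.
by apply: eq_bigr => j _; ring.
Qed.

Lemma sparse_form_has_ubound W s :
  has_ubound [set bilin W u v | u in sparse_unit s & v in sparse_unit s]%classic.
Proof.
exists (\sum_i \sum_j `|W i j|) => _ [u [u1 _] [v [v1 _] <-]].
apply: ler_sum => i _; apply: ler_sum => j _.
rewrite (le_trans (ler_norm _)) // !normrM -[leRHS]mul1r -[leRHS]mulr1.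
by rewrite ler_pM ?mulr_ge0 ?ler_pM ?sqnorm_le1_norm.
Qed.

Lemma bilin_le_sparse_form_sup W {s u v} :
  sparse_unit s u -> sparse_unit s v -> bilin W u v <= sparse_form_sup W s.
Proof.
by move=> su sv; apply: (ub_le_sup (sparse_form_has_ubound W s)); exists u => //; exists v.
Qed.

Lemma sparse_form_sup_ge0 W s : 0 <= s -> 0 <= sparse_form_sup W s.
Proof.
move=> s0; have := bilin_le_sparse_form_sup W (sparse_unit0 _ s0) (sparse_unit0 _ s0).
by rewrite bilin0l.
Qed.

End SparseBilinearForm.

Section PrincipalSubmatrix.
Context {R : realType} {n : nat} (S : {set 'I_n}).

Definition extend_vec (w : 'cV[R]_#|S|) (k : 'I_n) : R :=
  \sum_(i < #|S|) (enum_val i == k)%:R * w i 0.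

Lemma extend_vec_enum_val w i : extend_vec w (enum_val i) = w i 0.
Proof.
rewrite /extend_vec (bigD1 i) //= eqxx mul1r big1 ?addr0 // => j ji.
by rewrite (inj_eq enum_val_inj) (negbTE ji) mul0r.
Qed.

Lemma extend_vec_notin w k : k \notin S -> extend_vec w k = 0.
Proof.
move=> kS; rewrite /extend_vec big1 // => i _.
have [ik | _] := eqVneq (enum_val i) k; last by rewrite mul0r.
by rewrite -ik enum_valP in kS.
Qed.

Lemma sum_supported_enum_val (G : 'I_n -> R) :
  (forall k, k \notin S -> G k = 0) -> \sum_k G k = \sum_(i < #|S|) G (enum_val i).
Proof.
move=> GS; rewrite -(big_enum_val (A := mem S)) [RHS]big_mkcond /=.
by apply: eq_bigr => k _; case: ifP => // /negbT /GS.
Qed.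

Lemma sqnorm_extend_vec w : sqnorm (extend_vec w) = \sum_i w i 0 ^+ 2.
Proof.
rewrite /sqnorm (sum_supported_enum_val (fun k => extend_vec w k ^+ 2)).
  by apply: eq_bigr => i _; rewrite extend_vec_enum_val.
by move=> k kS; rewrite extend_vec_notin // expr0n.
Qed.

Lemma supp_size_extend_vec w : supp_size (extend_vec w) <= #|S|%:R.
Proof.
rewrite -sum1_card natr_sum [leRHS]big_mkcond; apply: ler_sum => k _.
by case: ifPn => [_ | /(extend_vec_notin w) ->]; rewrite ?eqxx // ler_nat leq_b1.
Qed.

Lemma bilin_extend_vec (W : 'M[R]_n) w v :
  bilin W (extend_vec w) (extend_vec v) = \sum_i w i 0 * (principal_submx W S *m v) i 0.
Proof.
rewrite /bilin (sum_supported_enum_val (fun k => \sum_j _)); last first.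
  by move=> k kS; rewrite big1 // => j _; rewrite extend_vec_notin // !mul0r.
apply: eq_bigr => i _; rewrite (sum_supported_enum_val (fun k => _ * _ * _)); last first.
  by move=> k kS; rewrite (extend_vec_notin v) // mulr0.
rewrite mxE mulr_sumr; apply: eq_bigr => j _.
by rewrite !extend_vec_enum_val mxE mulrA.
Qed.

Lemma opnorm_principal_submx_le (W : 'M[R]_n) s :
  #|S|%:R <= s -> opnorm (principal_submx W S) <= sparse_form_sup W s.
Proof.
move=> Ss; have s0 : 0 <= s by apply: le_trans Ss.
apply: opnorm_le => v v1; set a := vnorm _.
have [->|a_neq0] := eqVneq a 0; first exact: sparse_form_sup_ge0.
pose w := a^-1 *: (principal_submx W S *m v).
have -> : a = bilin W (extend_vec w) (extend_vec v).
  rewrite bilin_extend_vec; under eq_bigr do rewrite mxE -mulrA -expr2.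
  by rewrite -mulr_sumr -sqr_vnorm -/a expr2 mulKf.
have sparse_ext (u : 'cV[R]_#|S|) : \sum_i u i 0 ^+ 2 <= 1 -> sparse_unit s (extend_vec u).
  by split; rewrite ?sqnorm_extend_vec // (le_trans (supp_size_extend_vec u)).
apply: bilin_le_sparse_form_sup; apply: sparse_ext; last first.
  by rewrite -sqr_vnorm expr_le1 // sqrtr_ge0.
under eq_bigr do rewrite mxE exprMn.
by rewrite -mulr_sumr -sqr_vnorm -/a -exprMn mulVf // expr1n.
Qed.

End PrincipalSubmatrix.

Section GridRounding.
Context {R : realType}.
Implicit Types (h x : R).

Definition grid_round h x : R := (-1) ^+ (x < 0)%R * (Num.truncn (h * `|x|))%:R / h.

Lemma grid_round0 h : grid_round h 0 = 0.
Proof. by rewrite /grid_round normr0 mulr0 truncn0 mulr0 mul0r. Qed.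

Lemma norm_grid_round h x : 0 < h -> `|grid_round h x| = (Num.truncn (h * `|x|))%:R / h.
Proof. by move=> h0; rewrite /grid_round -mulrA normrMsign ger0_norm // divr_ge0 // ltW. Qed.

Lemma norm_grid_round_le h x : 0 < h -> `|grid_round h x| <= `|x|.
Proof.
move=> h0; rewrite norm_grid_round // ler_pdivrMr // mulrC truncn_le.
exact: mulr_ge0 (normr_ge0 x) (ltW h0).
Qed.

Lemma sqr_sub_grid_round_le h x : 0 < h -> (x - grid_round h x) ^+ 2 <= h ^- 2.
Proof.
move=> h0; have hx0 : 0 <= h * `|x| := mulr_ge0 (ltW h0) (normr_ge0 x).
have /andP[lo hi] := truncn_itv hx0; move: lo hi; set t := Num.truncn _ => lo hi.
have -> : x - grid_round h x = (-1) ^+ (x < 0)%R * (`|x| - t%:R / h).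
  by rewrite mulrBr mulrA mulr_sign_norm.
have ht : h * (t%:R / h) = t%:R by rewrite mulrC divfK ?gt_eqF.
rewrite exprMn sqrr_sign mul1r -exprVn ler_pXn2r // ?nnegrE ?invr_ge0 ?(ltW h0) //.
- by rewrite -(ler_pM2l h0) mulrBr ht divff ?gt_eqF // lerBlDl natr1 ltW.
- by rewrite -(ler_pM2l h0) mulr0 mulrBr ht subr_ge0.
Qed.

End GridRounding.

Section Net.
Context {R : realType}.

Definition code_val {K : nat} (c : 'I_K * bool) : R := (-1) ^+ c.2 * (c.1 : nat)%:R.

(* The code (0, true) also counts as nonzero, so that every coordinate has exactly one code
   of weight 1 in [code_weight] below. *)
Definition code_nz {K : nat} (c : 'I_K * bool) : R := (((c.1 : nat) != 0%N) || c.2)%:R.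

Variable s : R.

(* With this mesh, the rounding error of an s-sparse unit vector has squared norm at most
   s / (16 (s + 1)) < 1/16. *)
Definition grid_scale : R := 4 * Num.sqrt (s + 1).

Definition grid_size : nat := (Num.truncn grid_scale).+1.

Context {n : nat}.
Implicit Types (u : 'I_n -> R) (k : {ffun 'I_n -> 'I_grid_size * bool}).

Definition decode k (i : 'I_n) : R := code_val (k i) / grid_scale.

Definition admissible k : bool :=
  (\sum_i ((k i).1 : nat)%:R ^+ 2 <= grid_scale ^+ 2) && (\sum_i code_nz (k i) <= s).

Definition encode u : {ffun 'I_n -> 'I_grid_size * bool} :=
  [ffun i => (inord (Num.truncn (grid_scale * `|u i|)), (u i < 0)%R)].

Hypothesis s_ge0 : 0 <= s.

Lemma grid_scale_gt0 : 0 < grid_scale.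
Proof. by rewrite mulr_gt0 // sqrtr_gt0 ltr_wpDl. Qed.

Lemma sqr_grid_scale : grid_scale ^+ 2 = 16 * (s + 1).
Proof. by rewrite exprMn sqr_sqrtr ?addr_ge0 // -natrX. Qed.

Lemma encode_mag u i : `|u i| <= 1 ->
  ((encode u i).1 : nat) = Num.truncn (grid_scale * `|u i|).
Proof.
move=> u1; rewrite ffunE inordK // ltnS; apply: le_truncn.
by rewrite ler_piMr // ltW ?grid_scale_gt0.
Qed.

Lemma decode_encode u i : `|u i| <= 1 -> decode (encode u) i = grid_round grid_scale (u i).
Proof. by move=> u1; rewrite /decode /code_val encode_mag // ffunE. Qed.

Lemma sqnorm_decode_le1 k : admissible k -> sqnorm (decode k) <= 1.
Proof.
case/andP=> mag _; rewrite /sqnorm.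
under eq_bigr do rewrite /decode /code_val expr_div_n exprMn sqrr_sign mul1r.
by rewrite -mulr_suml ler_pdivrMr ?exprn_gt0 ?grid_scale_gt0 // mul1r.
Qed.

Section Rounding.
Context {u : 'I_n -> R} (su : sparse_unit s u).

Let u_norm : sqnorm u <= 1 := proj1 su.
Let u_supp : supp_size u <= s := proj2 su.
Let u_le1 i : `|u i| <= 1 := sqnorm_le1_norm u i u_norm.

Lemma encode_admissible : admissible (encode u).
Proof.
apply/andP; split.
  apply: le_trans (_ : \sum_i grid_scale ^+ 2 * u i ^+ 2 <= _); last first.
    by rewrite -mulr_sumr ler_piMr ?sqr_ge0 ?u_norm.
  apply: ler_sum => i _; rewrite encode_mag // -[u i ^+ 2]real_normK ?num_real // -exprMn.
  have hu0 : 0 <= grid_scale * `|u i| := mulr_ge0 (ltW grid_scale_gt0) (normr_ge0 _).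
  by rewrite ler_pXn2r ?nnegrE // truncn_le.
apply: le_trans u_supp; apply: ler_sum => i _; rewrite /code_nz ler_nat.
have [ui0|] := eqVneq (u i) 0; last by rewrite leq_b1.
by rewrite encode_mag // ffunE ui0 normr0 mulr0 truncn0 ltxx.
Qed.

Lemma decode_encode_eq0 i : u i = 0 -> decode (encode u) i = 0.
Proof. by move=> ui0; rewrite decode_encode // ui0 grid_round0. Qed.

Lemma sparse_unit_decode_encode : sparse_unit s (decode (encode u)).
Proof.
split; last by apply: le_trans u_supp; apply: supp_size_le => i /decode_encode_eq0.
apply: le_trans u_norm; apply: ler_sum => i _.
rewrite -[leLHS]real_normK ?num_real // -[leRHS]real_normK ?num_real //.
rewrite ler_pXn2r ?nnegrE // decode_encode //; exact: norm_grid_round_le grid_scale_gt0.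
Qed.

Lemma sparse_unit_encode_residual : sparse_unit s (fun i => 4 * (u i - decode (encode u) i)).
Proof.
split; last first.
  apply: le_trans u_supp; apply: supp_size_le => i ui0.
  by rewrite ui0 decode_encode_eq0 // subrr mulr0.
apply: le_trans (_ : \sum_i 16 / grid_scale ^+ 2 * (u i != 0)%:R <= _).
  apply: ler_sum => i _; have [ui0|_] := eqVneq (u i) 0.
    by rewrite ui0 decode_encode_eq0 // subrr mulr0 expr0n mulr0.
  rewrite mulr1 exprMn decode_encode // -natrX ler_pM2l //.
  exact: sqr_sub_grid_round_le grid_scale_gt0.
rewrite -mulr_sumr sqr_grid_scale -/(supp_size u) invfM mulrA divff // mul1r.
by rewrite ler_pdivrMl ?mulr1 ?ltr_wpDl // (le_trans u_supp) ?lerDl.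
Qed.

End Rounding.

Lemma sparse_form_sup_le_net (W : 'M[R]_n) m :
  (forall k1 k2, admissible k1 -> admissible k2 -> bilin W (decode k1) (decode k2) <= m) ->
  sparse_form_sup W s <= 2 * m.
Proof.
move=> net_le; set M := sparse_form_sup W s.
(* The rounding residuals are a quarter of s-sparse unit vectors: M <= m + M/4 + M/4. *)
suff : M <= m + M / 2 by lra.
apply: ge_sup => [|_ [u su [v sv <-]]].
  exists 0, (fun=> 0); first exact: sparse_unit0.
  by exists (fun=> 0); [exact: sparse_unit0 | exact: bilin0l].
pose y := decode (encode u); pose z := decode (encode v).
have -> : bilin W u v = bilin W y z + 4^-1 * bilin W (fun i => 4 * (u i - y i)) v
                         + 4^-1 * bilin W y (fun j => 4 * (v j - z j)).
  by rewrite bilinZl bilinZr !mulKf // -bilin_split.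
have := net_le _ _ (encode_admissible su) (encode_admissible sv).
have := bilin_le_sparse_form_sup W (sparse_unit_encode_residual su) sv.
have := bilin_le_sparse_form_sup W (sparse_unit_decode_encode su) (sparse_unit_encode_residual sv).
rewrite -/M -/y -/z; lra.
Qed.

End Net.

Section Hoeffding.
Context {R : realType}.

Lemma expR_mulBr_le1 (x : R) : expR x * (1 - x) <= 1.
Proof.
have := ler_wpM2l (expR_ge0 x) (expR_ge1Dx (- x)).
by rewrite -expRD subrr expR0.
Qed.

Lemma expR_add_expRN_le (a : R) : expR a + expR (- a) <= 2 * expR (2 * a ^+ 2).
Proof.
have sqa : a ^+ 2 = `|a| ^+ 2 by rewrite real_normK ?num_real.
have a0 := normr_ge0 a.
have [a_big|a_small] := lerP (2^-1) `|a|.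
  have a_le : `|a| <= 2 * a ^+ 2 by rewrite sqa; nra.
  have e1 : expR a <= expR (2 * a ^+ 2) by rewrite ler_expR (le_trans (ler_norm a)).
  have e2 : expR (- a) <= expR (2 * a ^+ 2).
    by rewrite ler_expR (le_trans _ a_le) // -normrN ler_norm.
  lra.
have a_sq : a ^+ 2 < 4^-1 by rewrite sqa; nra.
have /andP[lo hi] : - 2^-1 < a < 2^-1 by rewrite -ltr_norml.
have [pos1 pos2] : 0 <= 1 + a /\ 0 <= 1 - a by split; lra.
have G1 := ler_wpM2r pos1 (expR_mulBr_le1 a).
have G2 := ler_wpM2r pos2 (expR_mulBr_le1 (- a)).
have cosh_mul : (expR a + expR (- a)) * (1 - a ^+ 2) <= 2.
  have -> : (expR a + expR (- a)) * (1 - a ^+ 2) =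
    expR a * (1 - a) * (1 + a) + expR (- a) * (1 - - a) * (1 - a) by ring.
  lra.
have pos : 0 < 1 - a ^+ 2 by lra.
have := expR_ge1Dx (2 * a ^+ 2).
have : 2 <= 2 * (1 + 2 * a ^+ 2) * (1 - a ^+ 2) by nra.
nra.
Qed.

Variable I : finType.
Let signs := {ffun I -> bool}.
Implicit Types (c : I -> R) (x : signs).

Lemma sum_expR_sign_sum c :
  \sum_(x : signs) expR (\sum_p c p * sign R (x p)) = \prod_p (expR (c p) + expR (- c p)).
Proof.
have -> : \prod_p (expR (c p) + expR (- c p)) = \prod_p \sum_b expR (c p * sign R b).
  by apply: eq_bigr => p _; rewrite big_bool /sign mulr1 mulrN1.
by rewrite bigA_distr_bigA; apply: eq_bigr => x _; rewrite expR_sum.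
Qed.

Lemma card_ffun_bool : #|signs|%:R = 2 ^+ #|I| :> R.
Proof. by rewrite card_ffun card_bool natrX. Qed.

Lemma sum_expR_sign_sum_le c :
  \sum_(x : signs) expR (\sum_p c p * sign R (x p)) <= #|signs|%:R * expR (2 * \sum_p c p ^+ 2).
Proof.
rewrite sum_expR_sign_sum card_ffun_bool -prodr_const mulr_sumr expR_sum -big_split /=.
by apply: ler_prod => p _; rewrite addr_ge0 ?expR_ge0 ?expR_add_expRN_le.
Qed.

Lemma card_sign_sum_gt_le c (m : R) : 0 <= m -> \sum_p c p ^+ 2 <= 2 ->
  #|[set x : signs | m < \sum_p c p * sign R (x p)]|%:R <= #|signs|%:R * expR (- (m ^+ 2 / 16)).
Proof.
(* l = m / 8 minimises - l m + 4 l^2, the exponent obtained below. *)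
move=> m0 c2; pose l := m / 8; have l0 : 0 <= l by rewrite divr_ge0.
pose X x := \sum_p c p * sign R (x p).
have markov : #|[set x : signs | m < X x]|%:R <= \sum_(x : signs) expR (l * (X x - m)).
  rewrite -sum1_card natr_sum [leLHS]big_mkcond /=; apply: ler_sum => x _.
  rewrite inE; case: ifP => [mX|_]; last exact: expR_ge0.
  by rewrite -expR0 ler_expR mulr_ge0 // subr_ge0 ltW.
apply: (le_trans markov).
have -> : \sum_(x : signs) expR (l * (X x - m)) =
          expR (- (l * m)) * \sum_(x : signs) expR (\sum_p (l * c p) * sign R (x p)).
  rewrite mulr_sumr; apply: eq_bigr => x _; rewrite -expRD /X mulrBr mulr_sumr addrC.
  by under eq_bigr do rewrite mulrA.
apply: le_trans (ler_wpM2l (expR_ge0 _) (sum_expR_sign_sum_le _)) _.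
rewrite mulrCA ler_wpM2l // -expRD ler_expR.
under eq_bigr do rewrite exprMn.
rewrite -mulr_sumr /l; nra.
Qed.

End Hoeffding.

Section RademacherForm.
Context {R : realType} {n : nat}.
Implicit Types (y z : 'I_n -> R).

Definition pair_coef y z (p : 'I_n * 'I_n) : R :=
  (p.1 < p.2)%N%:R * (y p.1 * z p.2 + y p.2 * z p.1).

Lemma sum_ltn_swap (F : 'I_n -> 'I_n -> R) :
  \sum_(i < n) \sum_(j < n) (i < j)%N%:R * F j i = \sum_(i < n) \sum_(j < n) (j < i)%N%:R * F i j.
Proof. by rewrite exchange_big. Qed.

Lemma bilin_rademacherW (x : {ffun 'I_n * 'I_n -> bool}) y z :
  bilin (rademacherW R x) y z = \sum_p pair_coef y z p * sign R (x p).
Proof.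
rewrite sum_pairE.
under eq_bigr do under eq_bigr do rewrite /pair_coef /= mulrDr mulrDl -!mulrA.
under eq_bigr do rewrite big_split /=.
rewrite big_split /= (sum_ltn_swap (fun a b => y a * (z b * sign R (x (b, a))))) -big_split.
apply: eq_bigr => i _; rewrite -big_split; apply: eq_bigr => j _ /=.
by rewrite /rademacherW mxE; case: ltngtP => _; rewrite /= ?mul0r ?mul1r ?addr0 ?add0r ?mulr0; ring.
Qed.

Lemma sum_ltn_sym_le (F : 'I_n -> 'I_n -> R) : (forall i j, 0 <= F i j) ->
  \sum_(i < n) \sum_(j < n) (i < j)%N%:R * (F i j + F j i) <= \sum_i \sum_j F i j.
Proof.
move=> F0; under eq_bigr do under eq_bigr do rewrite mulrDr.
under eq_bigr do rewrite big_split /=.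
rewrite big_split /= (sum_ltn_swap F) -big_split; apply: ler_sum => i _.
rewrite -big_split; apply: ler_sum => j _ /=.
rewrite -mulrDl -[leRHS]mul1r ler_wpM2r //.
by case: ltngtP; rewrite /= ?add0r ?addr0.
Qed.

Lemma sum_pair_coef_sq_le y z : \sum_p pair_coef y z p ^+ 2 <= 2 * (sqnorm y * sqnorm z).
Proof.
pose G i j := (y i * z j) ^+ 2.
rewrite sum_pairE.
have -> : sqnorm y * sqnorm z = \sum_i \sum_j G i j.
  rewrite /sqnorm mulr_suml; apply: eq_bigr => i _; rewrite mulr_sumr.
  by apply: eq_bigr => j _; rewrite /G exprMn.
apply: le_trans (ler_wpM2l _ (sum_ltn_sym_le G _)) => //; last by move=> i j; rewrite sqr_ge0.
rewrite mulr_sumr; apply: ler_sum => i _; rewrite mulr_sumr; apply: ler_sum => j _.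
rewrite /pair_coef /G /=; case: (i < j)%N; rewrite /= ?mulr1n ?mul1r ?mul0r ?expr0n ?mulr0 //.
have := sqr_ge0 (y i * z j - y j * z i); nra.
Qed.

End RademacherForm.

Section CountingCodes.
Context {R : realType}.

Lemma sum_halves_le1 (K : nat) : \sum_(t < K) (2^-1 : R) ^+ t.+1 <= 1.
Proof.
have half_gt0 : (0 : R) < 2^-1 by rewrite invr_gt0.
have half_lt1 : `|2^-1 : R| < 1 by rewrite gtr0_norm // invf_lt1 ?ltr1n.
have := geometric_le_lim K (ltW half_gt0) half_gt0 half_lt1.
rewrite /series /= big_mkord (_ : 1 - 2^-1 = 2^-1) ?divff ?gt_eqF //; last by field.
move=> sum_le; apply: le_trans sum_le.
by under eq_bigr do rewrite exprS.
Qed.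

Lemma expR_Nln2_sqr_le (t : nat) : expR (- (ln (2 : R) * t%:R ^+ 2)) <= (2^-1) ^+ t.
Proof.
have ln2_ge0 : 0 <= ln (2 : R) by rewrite ln_ge0 // ler1n.
apply: le_trans (_ : expR (- (ln 2 * t%:R)) <= _).
  rewrite ler_expR lerN2 ler_wpM2l // -natrX ler_nat.
  by case: t => // t; rewrite leq_pmull.
by rewrite -mulNr expRM_natr expRN lnK ?posrE.
Qed.

Definition code_weight {K : nat} (b : R) (c : 'I_K * bool) : R :=
  expR (- (b * code_nz c + ln 2 * ((c.1 : nat)%:R) ^+ 2)).

Lemma sum_code_weight_le (K : nat) (a : R) : 0 < a ->
  \sum_(c : 'I_K.+1 * bool) code_weight (ln (1 / a)) c <= 1 + 3 * a.
Proof.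
move=> a0; have Ea : expR (- ln (1 / a)) = a by rewrite expRN lnK ?posrE ?divr_gt0 // div1r invrK.
rewrite sum_pairE big_ord_recl !big_bool /code_weight /code_nz /=.
rewrite expr0n /= !mulr0 !addr0 mulr1 oppr0 expR0 Ea.
set S := \sum_(i < K) _; suff : S <= 2 * a by lra.
apply: le_trans (_ : \sum_(i < K) 2 * a * (2^-1) ^+ i.+1 <= _); last first.
  by rewrite -mulr_sumr ler_piMr ?sum_halves_le1 // (mulr_ge0 _ (ltW a0)).
apply: ler_sum => i _; rewrite sumr_const card_bool opprD expRD Ea /bump leq0n add1n.
have := expR_Nln2_sqr_le i.+1; have := expR_ge0 (- (ln (2 : R) * i.+2%:R ^+ 2)).
rewrite mulr2n; nra.
Qed.

Lemma card_admissible_le (n : nat) (s a : R) : 0 < a -> a <= 1 -> 0 <= s ->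
  #|[set k : {ffun 'I_n -> 'I_(grid_size s) * bool} | admissible s k]|%:R <=
  expR (ln (1 / a) * s + ln 2 * grid_scale s ^+ 2 + 3 * a * n%:R).
Proof.
(* Every admissible code has weight \prod_i code_weight b (k i) >= expR (- E), and the total
   weight of all codes factors over the coordinates. *)
move=> a0 a1 s0; set b := ln (1 / a); set E := b * s + ln 2 * grid_scale s ^+ 2.
have b0 : 0 <= b by rewrite ln_ge0 // ler_pdivlMr // mul1r.
have ln2_ge0 : 0 <= ln (2 : R) by rewrite ln_ge0 // ler1n.
rewrite expRD -sum1_card natr_sum.
apply: le_trans (_ : \sum_(k : {ffun 'I_n -> 'I_(grid_size s) * bool})
                       expR E * \prod_i code_weight b (k i) <= _).
  rewrite [leLHS]big_mkcond /=; apply: ler_sum => k _; rewrite inE.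
  case: ifP => [/andP[mag supp] | _]; last first.
    by rewrite mulr_ge0 ?expR_ge0 // prodr_ge0 // => i _; rewrite expR_ge0.
  rewrite /code_weight -expR_sum -expRD (le_trans _ (expR_ge1Dx _)) // lerDl.
  rewrite sumrN big_split /= -!mulr_sumr subr_ge0.
  by rewrite lerD // ler_wpM2l.
rewrite -mulr_sumr ler_wpM2l ?expR_ge0 //.
rewrite -(bigA_distr_bigA (fun (i : 'I_n) (c : 'I_(grid_size s) * bool) => code_weight b c)) /=.
apply: le_trans (_ : \prod_(i : 'I_n) expR (3 * a) <= _); last first.
  by rewrite prodr_const card_ord -expRM_natr.
apply: ler_prod => i _; rewrite sumr_ge0 => [|c _]; last exact: expR_ge0.
exact: le_trans (sum_code_weight_le _ _ a0) (expR_ge1Dx _).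
Qed.

End CountingCodes.

Section NetEvent.
Context {R : realType} {n : nat}.
Variables (s m : R).

Let codes := {ffun 'I_n -> 'I_(grid_size s) * bool}.
Let samples := {ffun 'I_n * 'I_n -> bool}.

Definition net_event (x : samples) : bool :=
  [forall k1 : codes, forall k2 : codes, (admissible s k1 && admissible s k2) ==>
     (bilin (rademacherW R x) (decode s k1) (decode s k2) <= m)].

Lemma opnorm_principal_submx_le_of_net_event (x : samples) (S : {set 'I_n}) :
  0 <= s -> net_event x -> #|S|%:R <= s -> opnorm (principal_submx (rademacherW R x) S) <= 2 * m.
Proof.
move=> s0 /forallP net_le Ss; apply: le_trans (opnorm_principal_submx_le _ _ _ Ss) _.
apply: sparse_form_sup_le_net => // k1 k2 adm1 adm2.
by move/forallP: (net_le k1) => /(_ k2); rewrite adm1 adm2.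
Qed.

Lemma decode_small (k : codes) i : s < 1 -> admissible s k -> decode s k i = 0.
Proof.
move=> s1 /andP[_ supp].
have nz_le : code_nz (k i) <= s.
  by apply: le_trans supp; rewrite (bigD1 i) //= lerDl sumr_ge0.
move: (le_lt_trans nz_le s1).
rewrite /code_nz ltrn1 ltnS leqn0 eqb0 negb_or negbK => /andP[/eqP k0 _].
by rewrite /decode /code_val k0 mulr0 mul0r.
Qed.

Lemma net_event_small (x : samples) : s < 1 -> 0 <= m -> net_event x.
Proof.
move=> s1 m0; apply/forallP => k1; apply/forallP => k2; apply/implyP => /andP[adm1 _].
rewrite (_ : decode s k1 = fun=> 0) ?bilin0l //.
by apply/funext => i; rewrite decode_small.
Qed.

Hypotheses (s_ge0 : 0 <= s) (m_ge0 : 0 <= m).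

Lemma card_bilin_decode_gt_le (k1 k2 : codes) : admissible s k1 -> admissible s k2 ->
  #|[set x : samples | m < bilin (rademacherW R x) (decode s k1) (decode s k2)]|%:R <=
  #|samples|%:R * expR (- (m ^+ 2 / 16)).
Proof.
move=> adm1 adm2.
have -> : [set x : samples | m < bilin (rademacherW R x) (decode s k1) (decode s k2)] =
          [set x : samples | m < \sum_p pair_coef (decode s k1) (decode s k2) p * sign R (x p)].
  by apply/setP => x; rewrite !inE bilin_rademacherW.
apply: card_sign_sum_gt_le => //; apply: le_trans (sum_pair_coef_sq_le _ _) _.
have := sqnorm_decode_le1 _ s_ge0 _ adm1; have := sqnorm_decode_le1 _ s_ge0 _ adm2.
have := sqnorm_ge0 (decode s k1); have := sqnorm_ge0 (decode s k2); nra.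
Qed.

Lemma card_not_net_event_le :
  #|[set x | ~~ net_event x]|%:R <=
  #|[set k : codes | admissible s k]|%:R ^+ 2 * (#|samples|%:R * expR (- (m ^+ 2 / 16))).
Proof.
set A := [set k : codes | admissible s k].
set C := #|samples|%:R * expR (- (m ^+ 2 / 16)).
pose bad k1 k2 (x : samples) := m < bilin (rademacherW R x) (decode s k1) (decode s k2).
apply: le_trans (_ : \sum_(k1 in A) \sum_(k2 in A) #|[set x | bad k1 k2 x]|%:R <= _); last first.
  apply: le_trans (_ : \sum_(k1 in A) \sum_(k2 in A) C <= _).
    apply: ler_sum => k1 /[!inE] adm1; apply: ler_sum => k2 /[!inE] adm2.
    exact: card_bilin_decode_gt_le.
  by rewrite !sumr_const -mulrnA -natrX mulr_natl.
rewrite card_set_natr.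
apply: le_trans (_ : \sum_x \sum_(k1 in A) \sum_(k2 in A) (bad k1 k2 x)%:R <= _).
  apply: ler_sum => x _ /=; case: (boolP (net_event x)) => [_ | ].
    by apply: sumr_ge0 => k1 _; apply: sumr_ge0 => k2 _.
  move=> /forallPn[k1 /forallPn[k2]]; rewrite negb_imply -ltNge => /andP[/andP[adm1 adm2] bad12].
  rewrite (bigD1 k1) ?inE //= (bigD1 k2) ?inE //= {1}/bad bad12 -addrA lerDl.
  by rewrite addr_ge0 // !sumr_ge0 // => *; rewrite sumr_ge0.
rewrite exchange_big; apply: ler_sum => k1 _; rewrite exchange_big; apply: ler_sum => k2 _.
by rewrite card_set_natr.
Qed.

End NetEvent.

Lemma prob_ge_compl (R : realType) (n : nat) (E P : pred {ffun 'I_n * 'I_n -> bool}) :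
  (forall x, E x -> P x) ->
  1 - #|[set x | ~~ E x]|%:R / #|{ffun 'I_n * 'I_n -> bool}|%:R <= prob R P.
Proof.
move=> EP; set T := ({ffun 'I_n * 'I_n -> bool}).
have T_gt0 : (0 : R) < #|T|%:R by rewrite ltr0n; apply/card_gt0P; exists [ffun=> false].
have card_P : #|[set x | P x]%classic| = #|[set x : T | P x]|.
  by apply: eq_card => x; rewrite inE; apply/idP/idP; rewrite in_setE.
rewrite /prob card_P ler_pdivlMr // mulrBl divfK ?gt_eqF // mul1r.
rewrite lerBlDr -natrD ler_nat -(cardsC [set x : T | P x]) leq_add2l.
by apply: subset_leq_card; apply/fintype.subsetP => x; rewrite !inE; apply: contra; exact: EP.
Qed.

Section FinalBound.
Context {R : realType}.
Variables (g beta : R) (n : nat).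
Hypotheses (beta_gt0 : 0 < beta) (g_gt0 : 0 < g) (g_le_half : g <= 2^-1).
Hypothesis g_le_beta : 4096 * g <= beta ^+ 2.

Lemma sqr_mul_ln_inv_sqr_le : g ^+ 2 * ln (1 / g ^+ 2) <= 2 * g.
Proof.
have ginv0 : 0 < 1 / g by rewrite divr_gt0.
have -> : 1 / g ^+ 2 = (1 / g) ^+ 2 by rewrite expr_div_n expr1n.
have ln_le : ln (1 / g) <= 1 / g - 1.
  by have := @le_ln1Dx R (1 / g - 1); rewrite addrCA subrr addr0; apply; lra.
have := ler_wpM2l (sqr_ge0 g) ln_le.
have -> : g ^+ 2 * (1 / g - 1) = g - g ^+ 2 by field; rewrite gt_eqF.
by rewrite lnXn // mulr2n; have := sqr_ge0 g; lra.
Qed.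

Let samples := {ffun 'I_n * 'I_n -> bool}.
Let a := g ^+ 2.
Let s := a * n%:R.
Let m := beta * Num.sqrt n%:R / 2.

Lemma net_exponent_le : 1 <= s ->
  2 * (ln (1 / a) * s + ln 2 * grid_scale s ^+ 2 + 3 * a * n%:R) - m ^+ 2 / 16 <=
  - (a * ln (1 / a) * n%:R).
Proof.
move=> s1; have n0 : (0 : R) <= n%:R by [].
have ab := sqr_mul_ln_inv_sqr_le; rewrite -/a in ab.
have ln2_le1 : ln (2 : R) <= 1 by have := @le_ln1Dx R 1; apply; lra.
have s0 : 0 <= s by lra.
have h2 : ln 2 * grid_scale s ^+ 2 <= 32 * s.
  rewrite (le_trans (ler_piMl (sqr_ge0 _) ln2_le1)) // sqr_grid_scale //; lra.
have m2 : m ^+ 2 = beta ^+ 2 * n%:R / 4.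
  by rewrite /m expr_div_n exprMn sqr_sqrtr //; field.
have abn := ler_wpM2r n0 ab.
have an : s <= g / 2 * n%:R by rewrite ler_wpM2r // /a expr2 ler_pM2l //; lra.
have gn := ler_wpM2r n0 g_le_beta.
have bs : ln (1 / a) * s = a * ln (1 / a) * n%:R by rewrite /s; ring.
have sn : s = a * n%:R by [].
rewrite m2 bs; lra.
Qed.

Lemma not_net_event_fraction_le :
  #|[set x : samples | ~~ net_event s m x]|%:R / #|samples|%:R <= expR (- (a * ln (1 / a) * n%:R)).
Proof.
have T_gt0 : (0 : R) < #|samples|%:R.
  by rewrite ltr0n; apply/card_gt0P; exists [ffun=> false].
have a_gt0 : 0 < a by rewrite exprn_gt0.
have a_le1 : a <= 1 by rewrite /a expr2; move: g_gt0 g_le_half; nra.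
have s0 : 0 <= s := mulr_ge0 (ltW a_gt0) (ler0n _ n).
have m0 : 0 <= m by rewrite /m !mulr_ge0 ?sqrtr_ge0 ?ltW.
have [s_lt1|s_ge1] := ltrP s 1.
  rewrite (_ : #|_| = 0%N) ?mul0r ?expR_ge0 //.
  by apply: eq_card0 => x; rewrite !inE net_event_small.
rewrite ler_pdivrMr // mulrC; apply: le_trans (card_not_net_event_le _ _ s0 m0) _.
rewrite mulrCA ler_wpM2l ?ler0n //.
have card_le := card_admissible_le n _ _ a_gt0 a_le1 s0.
apply: le_trans (ler_wpM2r (expR_ge0 _) (lerXn2r 2 _ _ card_le)) _; rewrite ?nnegrE ?expR_ge0 //.
rewrite -expRM_natr -expRD ler_expR mulrC; exact: net_exponent_le.
Qed.

End FinalBound.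

Theorem lemma2 (R : realType) (beta : R) :
  0 < beta ->
  exists alpha : R, 0 < alpha /\ alpha < 1 /\
    forall n : nat,
      1 - 4 * expR (- (alpha * ln (1 / alpha) * n%:R)) <=
      prob R (fun x : {ffun 'I_n * 'I_n -> bool} =>
        [forall S : {set 'I_n},
          (#|S|%:R <= alpha * n%:R) ==>
          (opnorm (principal_submx (rademacherW R x) S) <= beta * Num.sqrt (n%:R))]).
Proof.
move=> beta_gt0; pose g := Num.min 2^-1 (beta ^+ 2 / 4096).
have g_gt0 : 0 < g by rewrite lt_min invr_gt0 ltr0n /= (divr_gt0 (exprn_gt0 2 beta_gt0)) ?ltr0n.
have g_le_half : g <= 2^-1 by rewrite ge_min lexx.
have g_le_beta : 4096 * g <= beta ^+ 2.
  have : g <= beta ^+ 2 / 4096 by rewrite ge_min lexx orbT.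
  by rewrite ler_pdivlMr ?ltr0n // mulrC.
exists (g ^+ 2); split; first exact: exprn_gt0.
split; first by rewrite expr2; move: g_gt0 g_le_half; nra.
move=> n; set s := g ^+ 2 * n%:R; set m := beta * Num.sqrt n%:R / 2.
have := not_net_event_fraction_le _ _ n beta_gt0 g_gt0 g_le_half g_le_beta.
rewrite -/s -/m => frac_le.
apply: le_trans (prob_ge_compl _ _ (net_event s m) _ _); last first.
  move=> x net; apply/forallP => S; apply/implyP => Ss.
  rewrite (_ : beta * _ = 2 * m); last by rewrite /m; field.
  exact: opnorm_principal_submx_le_of_net_event _ _ _ _ (mulr_ge0 (sqr_ge0 g) (ler0n _ n)) net Ss.
have := expR_ge0 (- (g ^+ 2 * ln (1 / g ^+ 2) * n%:R)); lra.
Qed.
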